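(* Let $c \ge 3$, let $H$ be a convex polygon in the plane with $c$ vertices, and let $T$ be a triangulation of $H$. Then every Sperner labelling of $T$ has a triangle of $T$ whose three vertices have three different labels.
   Context: A triangulation $T$ of $H$ is a subdivision of $H$ into finitely many triangles meeting face-to-face, whose vertex set contains the vertices of $H$. A Sperner labelling of $T$ is a function from the vertices of $T$ to $\{0,\dots,c-1\}$ such that the $c$ vertices of $H$ receive pairwise different labels, and every vertex of $T$ lying on the boundary of $H$ between two consecutive vertices $u,w$ of $H$ (on the edge $uw$) receives the label of $u$ or the label of $w$. *)

From HB Require Import structures.
From mathcomp Require Import all_boot all_order all_algebra.
Set Implicit Arguments. Unset Strict Implicit. Unset Printing Implicit Defensive.
Import Order.TTheory GRing.Theory Num.Theory.
Local Open Scope ring_scope.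

Section Defs.
Variable R : realFieldType.
Notation pt := 'rV[R]_2.

Definition in_conv (s : seq pt) (x : pt) : Prop :=
  exists w : 'I_(size s) -> R,
    (forall i, 0 <= w i) /\ \sum_i w i = 1 /\ x = \sum_i w i *: s`_i.

Definition orient (a b p : pt) : R :=
  (b 0 0 - a 0 0) * (p 0 1 - a 0 1) - (b 0 1 - a 0 1) * (p 0 0 - a 0 0).

(* v : 'I_c -> pt lists the vertices of a convex polygon in cyclic order:
   for every edge v i v (i+1), all other vertices lie strictly on one
   common side of the line through this edge. *)
Definition convex_polygon (c : nat) (v : 'I_c -> pt) : Prop :=
  forall i j k : 'I_c,
    j != i -> j != ordS i -> k != i -> k != ordS i ->
    0 < orient (v i) (v (ordS i)) (v j) * orient (v i) (v (ordS i)) (v k).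

Definition polygon_pts (c : nat) (v : 'I_c -> pt) (x : pt) : Prop :=
  in_conv [seq v i | i <- enum 'I_c] x.

Definition triangle := (pt * pt * pt)%type.
Definition tri_vs (t : triangle) : seq pt := [:: t.1.1; t.1.2; t.2].
Definition nondegenerate (t : triangle) : Prop := orient t.1.1 t.1.2 t.2 != 0.

Definition tvertex (T : seq triangle) (x : pt) : Prop :=
  exists2 t, t \in T & x \in tri_vs t.

(* T is a triangulation of the convex polygon with vertex list v:
   finitely many nondegenerate triangles whose union is H, meeting
   face-to-face (the intersection of two triangles is the convex hull of
   their common vertices, i.e. empty, a common vertex, a common edge or the
   whole triangle), and whose vertex set contains the vertices of H. *)
Definition triangulation (c : nat) (v : 'I_c -> pt) (T : seq triangle) : Prop :=
  [/\ forall t, t \in T -> nondegenerate t,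
      forall x, polygon_pts v x <-> exists2 t, t \in T & in_conv (tri_vs t) x,
      forall t1 t2, t1 \in T -> t2 \in T -> forall x,
        (in_conv (tri_vs t1) x /\ in_conv (tri_vs t2) x) <->
        in_conv [seq p <- tri_vs t1 | p \in tri_vs t2] x
    & forall i, tvertex T (v i)].

(* Sperner labelling with labels {0,...,c-1} (only its values on vertices of
   T matter). *)
Definition sperner_labelling (c : nat) (v : 'I_c -> pt) (T : seq triangle)
    (lab : pt -> 'I_c) : Prop :=
  (forall i j : 'I_c, lab (v i) = lab (v j) -> i = j) /\
  (forall x, tvertex T x -> forall i : 'I_c,
     in_conv [:: v i; v (ordS i)] x ->
     lab x = lab (v i) \/ lab x = lab (v (ordS i))).

End Defs.

(* Sperner's lemma by a signed count over the directed edges of the triangles.  Let a and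
   b be the labels of the polygon vertices v0 and v1.  A directed edge xy of a triangle,
   signed by the orientation of that triangle, gets the weight g(lab x, lab y) - (psi y -
   psi x), where g(a, b) = 1, g(b, a) = -1, g = 0 otherwise, and psi p = 1 iff p lies on
   the side v0 v1 and has label b.  Around a triangle without three distinct labels the
   weights add up to zero, so the total over all triangles vanishes.  An edge inside the
   polygon is shared by exactly two triangles lying on opposite sides of it, and their
   contributions cancel.  On the boundary the Sperner condition and the correction psi make
   every contribution vanish, except for the edges of the side v1 v2 ending at v1, which
   contribute the orientation sign of the polygon; there is at least one such edge, so the
   total is nonzero.

   The facts about the triangulation are obtained by perturbation: a point slightly across
   the midpoint of an inner edge, or slightly off v1 along the side v1 v2, lies in a
   triangle which, by the face-to-face condition, contains that edge, resp. v1. *)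

From HB Require Import structures.
From mathcomp Require Import all_boot all_order all_algebra.
From mathcomp Require Import ring lra zify.
From Stdlib Require Import Classical.
Import Order.TTheory GRing.Theory Num.Theory.
Set Implicit Arguments. Unset Strict Implicit. Unset Printing Implicit Defensive.
Local Open Scope ring_scope.

Lemma sg_eq_of_mul_gt0 (R : realDomainType) (x y : R) : 0 < x * y -> Num.sg x = Num.sg y.
Proof. by move/gtr0_sg/eqP; rewrite sgrM -(sgr_id y) mulr_sg_eq1 sgr_id => /andP[_ /eqP]. Qed.

Lemma sg_opp_of_mul_lt0 (R : realDomainType) (x y : R) : x * y < 0 -> Num.sg x = - Num.sg y.
Proof. by move=> xy; rewrite -sgrN; apply: sg_eq_of_mul_gt0; rewrite mulrN oppr_gt0. Qed.

Lemma divr_ge0_scale (R : realFieldType) (s x o : R) : 0 <= s * x -> 0 < s * o -> 0 <= x / o.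
Proof.
move=> sx so; have s0 : s != 0 by apply: contraTneq so => ->; rewrite mul0r ltxx.
have -> : x / o = (s * x) / (s * o) by rewrite invfM mulrACA mulfV // mul1r.
by rewrite divr_ge0 // ltW.
Qed.

(** * Orientation and convex combinations *)

Section Orientation.
Variable R : realFieldType.
Local Notation pt := 'rV[R]_2.
Implicit Types (a b c p q x : pt) (s : R).

Lemma row2_eq p q : p 0 0 = q 0 0 -> p 0 1 = q 0 1 -> p = q.
Proof.
move=> e0 e1; apply/rowP => -[[|[|//]] j] /=.
- by rewrite (_ : Ordinal j = 0) //; exact: val_inj.
- by rewrite (_ : Ordinal j = 1) //; exact: val_inj.
Qed.

Lemma orient_rot a b c : orient a b c = orient b c a.
Proof. rewrite /orient; ring. Qed.

Lemma orient_swap a b c : orient b a c = - orient a b c.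
Proof. rewrite /orient; ring. Qed.

Lemma orient_xxy a b : orient a a b = 0.
Proof. rewrite /orient; ring. Qed.

Lemma orient_xyx a b : orient a b a = 0.
Proof. rewrite /orient; ring. Qed.

Lemma orient_xyy a b : orient a b b = 0.
Proof. rewrite /orient; ring. Qed.

Lemma orient_lerp a b p q s :
  orient a b ((1 - s) *: p + s *: q) = (1 - s) * orient a b p + s * orient a b q.
Proof. rewrite /orient !mxE; ring. Qed.

Lemma orient_comb3 a b p q x (al be ga : R) : al + be + ga = 1 ->
  orient a b (al *: p + be *: q + ga *: x) =
  al * orient a b p + be * orient a b q + ga * orient a b x.
Proof. move=> h; have -> : al = 1 - be - ga by lra. rewrite /orient !mxE; ring. Qed.

Lemma orient_lerp_base a b s s' p :
  orient ((1 - s) *: a + s *: b) ((1 - s') *: a + s' *: b) p = (s' - s) * orient a b p.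
Proof. rewrite /orient !mxE; ring. Qed.

Lemma orient_lerp_dst a b p s : orient a ((1 - s) *: a + s *: b) p = s * orient a b p.
Proof. rewrite /orient !mxE; ring. Qed.

Lemma orient_sum (I : finType) (w : I -> R) (P : I -> pt) a b : \sum_i w i = 1 ->
  orient a b (\sum_i w i *: P i) = \sum_i w i * orient a b (P i).
Proof.
move=> w1; have coordE j : (\sum_i w i *: P i) 0 j = \sum_i w i * P i 0 j.
  by rewrite summxE; apply: eq_bigr => i _; rewrite mxE.
rewrite /orient !coordE.
transitivity (\sum_i ((b 0 0 - a 0 0) * (w i * P i 0 1) - ((b 0 0 - a 0 0) * a 0 1) * w i
   - (b 0 1 - a 0 1) * (w i * P i 0 0) + ((b 0 1 - a 0 1) * a 0 0) * w i)).
  by rewrite !big_split /= !sumrN -!mulr_sumr w1; ring.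
by apply: eq_bigr => i _; ring.
Qed.

Lemma orient_parallelogram a b p q x :
  orient a b (p + q - x) = orient a b p + orient a b q - orient a b x.
Proof. rewrite /orient !mxE; ring. Qed.

Definition midpoint p q : pt := 2^-1 *: p + 2^-1 *: q.

Lemma subr_half : 1 - 2^-1 = 2^-1 :> R.
Proof. by rewrite {1}(splitr 1) mul1r addrK. Qed.

Lemma orient_midpoint a b p q :
  orient a b (midpoint p q) = 2^-1 * orient a b p + 2^-1 * orient a b q.
Proof. by rewrite /midpoint -{1}subr_half orient_lerp subr_half. Qed.

Lemma orient_cramer a b c x :
  orient a b c *: x = orient b c x *: a + orient c a x *: b + orient a b x *: c.
Proof. apply: row2_eq; rewrite /orient !mxE; ring. Qed.

Lemma orient_bary_sum a b c x :
  orient b c x + orient c a x + orient a b x = orient a b c.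
Proof. rewrite /orient; ring. Qed.

Definition conv3 a b c x := exists al be ga : R,
  [/\ 0 <= al, 0 <= be, 0 <= ga, al + be + ga = 1 & x = al *: a + be *: b + ga *: c].

Lemma in_conv3 a b c x : in_conv [:: a; b; c] x <-> conv3 a b c x.
Proof.
rewrite /in_conv /=; split.
  case=> w [w0 [+ ->]]; rewrite !big_ord_recl !big_ord0 /= !addr0 => w1.
  exists (w ord0), (w (lift ord0 ord0)), (w (lift ord0 (lift ord0 ord0))).
  by split => //; rewrite -?addrA.
case=> al [be [ga [h0 h1 h2 h3 ->]]].
exists (fun i : 'I_3 => [:: al; be; ga]`_i); split.
  by case=> [[|[|[|//]]] ?].
by rewrite !big_ord_recl !big_ord0 /= !addr0 !addrA.
Qed.

Lemma in_conv2 a b x :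
  in_conv [:: a; b] x <-> exists2 s, 0 <= s <= 1 & x = (1 - s) *: a + s *: b.
Proof.
rewrite /in_conv /=; split.
  case=> w [w0 [+ ->]]; rewrite !big_ord_recl !big_ord0 /= !addr0 => w1.
  exists (w (lift ord0 ord0)); first by have := w0 ord0; have := w0 (lift ord0 ord0); lra.
  by congr (_ *: _ + _); lra.
case=> s /andP[s0 s1] ->; exists (fun i : 'I_2 => [:: 1 - s; s]`_i); split.
  by case=> [[|[|//]] ?] /=; lra.
by rewrite !big_ord_recl !big_ord0 /= !addr0; split => //; lra.
Qed.

Lemma in_conv_mem (s : seq pt) p : p \in s -> in_conv s p.
Proof.
move=> ps; pose k := Ordinal (etrans (index_mem p s) ps).
exists (fun i => (i == k)%:R); split; first by move=> i; apply: ler0n.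
split.
  by rewrite (bigD1 k) //= eqxx big1 ?addr0 // => i /negPf->.
by rewrite (bigD1 k) //= eqxx scale1r nth_index // big1 ?addr0 // => i /negPf->; rewrite scale0r.
Qed.

Lemma conv3_rot a b c x : conv3 a b c x -> conv3 b c a x.
Proof.
case=> al [be [ga [h0 h1 h2 h3 ->]]]; exists be, ga, al; split => //; first lra.
by rewrite [RHS]addrC addrA.
Qed.

Lemma conv3_swap a b c x : conv3 a b c x -> conv3 b a c x.
Proof.
case=> al [be [ga [h0 h1 h2 h3 ->]]]; exists be, al, ga; split => //; first lra.
by rewrite (addrC (al *: a)).
Qed.

Lemma conv3_baryP a b c x : orient a b c != 0 ->
  conv3 a b c x <-> [/\ 0 <= orient b c x / orient a b c,
    0 <= orient c a x / orient a b c & 0 <= orient a b x / orient a b c].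
Proof.
move=> o0; split.
  case=> al [be [ga [h0 h1 h2 h3 ->]]].
  rewrite !orient_comb3 // !(orient_xxy, orient_xyx, orient_xyy).
  rewrite -(orient_rot a b c) -(orient_rot c a b) (orient_rot c a b).
  by rewrite !mulr0 ?addr0 ?add0r !mulfK.
case=> h1 h2 h3; exists (orient b c x / orient a b c), (orient c a x / orient a b c),
  (orient a b x / orient a b c); split => //.
  by rewrite -!mulrDl orient_bary_sum mulfV.
apply: (scalerI o0); rewrite !scalerDr !scalerA !(mulrC (orient a b c)) !mulfVK //.
exact: orient_cramer.
Qed.

Lemma conv3_lerp_midpoint a b c s : 0 <= s <= 1 ->
  conv3 a b c ((1 - s) *: midpoint a b + s *: c).
Proof.
case/andP=> s0 s1; exists ((1 - s) / 2), ((1 - s) / 2), s.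
split; rewrite ?divr_ge0 ?subr_ge0 //; first lra.
by rewrite /midpoint scalerDr !scalerA.
Qed.

Lemma conv3_midpoint a b c : conv3 a b c (midpoint a b).
Proof.
exists 2^-1, 2^-1, 0; split; rewrite ?invr_ge0 ?ler0n //; last by rewrite scale0r addr0.
by rewrite addr0 -{1}subr_half subrK.
Qed.

End Orientation.

Section AffineFunctionals.
Variable R : realFieldType.
Local Notation pt := 'rV[R]_2.
Implicit Types (f g : pt -> R) (s : seq pt) (a b x : pt).

Definition affine f := forall (I : finType) (w : I -> R) (P : I -> pt),
  \sum_i w i = 1 -> f (\sum_i w i *: P i) = \sum_i w i * f (P i).

Lemma orient_affine a b : affine (orient a b).
Proof. by move=> I w P; apply: orient_sum. Qed.

Lemma affineZ (k : R) f : affine f -> affine (fun p => k * f p).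
Proof.
by move=> af I w P w1; rewrite af // mulr_sumr; apply: eq_bigr => i _; rewrite mulrCA.
Qed.

Lemma affineD f g : affine f -> affine g -> affine (fun p => f p + g p).
Proof.
by move=> af ag I w P w1; rewrite af // ag // -big_split; apply: eq_bigr => i _; rewrite mulrDr.
Qed.

Lemma affine_cst (k : R) : affine (fun => k).
Proof. by move=> I w P w1; rewrite -mulr_suml w1 mul1r. Qed.

Lemma sumr_gt0_exists (I : finType) (F : I -> R) : 0 < \sum_i F i -> exists i, 0 < F i.
Proof.
move=> h; apply/existsP; apply: contraLR h => /existsPn hn.
by rewrite -leNgt; apply: sumr_le0 => i _; rewrite leNgt hn.
Qed.

Lemma conv_ge0 f s x : affine f -> in_conv s x ->
  {in s, forall p, 0 <= f p} -> 0 <= f x.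
Proof.
move=> af [w [w0 [w1 ->]]] f0; rewrite af //; apply: sumr_ge0 => i _.
by rewrite mulr_ge0 // f0 // mem_nth.
Qed.

Lemma conv_eq0 f s x : affine f -> in_conv s x ->
  {in s, forall p, f p = 0} -> f x = 0.
Proof.
move=> af [w [w0 [w1 ->]]] f0; rewrite af //; apply: big1 => i _.
by rewrite f0 ?mulr0 // mem_nth.
Qed.

Lemma conv_lt0 f s x : affine f -> in_conv s x -> f x < 0 ->
  exists2 p, p \in s & f p < 0.
Proof.
move=> af hx fx; apply: NNPP => hn; move: fx; apply/negP; rewrite -leNgt.
by apply: (conv_ge0 af hx) => p ps; rewrite leNgt; apply/negP => fp; apply: hn; exists p.
Qed.

Lemma conv_face f g s x : affine f -> affine g -> in_conv s x ->
  {in s, forall p, 0 <= f p} -> f x = 0 -> 0 < g x ->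
  exists2 p, p \in s & f p = 0 /\ 0 < g p.
Proof.
move=> af ag [w [w0 [w1 ->]]] f0; rewrite af // ag // => fx gx.
have wf0 := psumr_eq0P (fun i _ => mulr_ge0 (w0 i) (f0 _ (mem_nth 0 (ltn_ord i)))) fx.
have [i wgi] := sumr_gt0_exists gx.
have wi0 : w i != 0 by apply: contraTneq wgi => ->; rewrite mul0r ltxx.
exists s`_i; first exact: mem_nth.
split; last by rewrite pmulr_rgt0 // lt_def wi0 w0 in wgi.
by have /eqP := wf0 i isT; rewrite mulf_eq0 (negPf wi0) => /eqP.
Qed.

Lemma conv_common_zero f g s x : affine f -> affine g -> in_conv s x ->
  {in s, forall p, 0 <= f p} -> f x = 0 -> {in s, forall p, 0 <= g p} -> g x = 0 ->
  exists2 p, p \in s & f p = 0 /\ g p = 0.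
Proof.
move=> af ag hx f0 fx g0 gx.
have fg0 : {in s, forall p, 0 <= f p + g p} by move=> p ps; rewrite addr_ge0 ?f0 ?g0.
have fgx : f x + g x = 0 by rewrite fx gx addr0.
have [p ps [fgp _]] := conv_face (affineD af ag) (affine_cst 1) hx fg0 fgx ltr01.
by exists p => //; have := f0 p ps; have := g0 p ps; lra.
Qed.

End AffineFunctionals.

Section NearZero.
Variable R : realFieldType.
Local Notation pt := 'rV[R]_2.
Implicit Types (P Q : R -> Prop).

Definition near0 P := exists2 d : R, 0 < d & forall e, 0 < e -> e < d -> P e.

Lemma near0_and P Q : near0 P -> near0 Q -> near0 (fun e => P e /\ Q e).
Proof.
case=> d1 d10 h1 [d2 d20 h2]; exists (Num.min d1 d2); first by rewrite lt_min d10.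
by move=> e e0; rewrite lt_min => /andP[e1 e2]; split; [exact: h1|exact: h2].
Qed.

Lemma near0_mono P Q : (forall e, 0 < e -> P e -> Q e) -> near0 P -> near0 Q.
Proof. by move=> PQ [d d0 hd]; exists d => // e e0 ed; apply/PQ/hd. Qed.

Lemma near0_all (T : eqType) (s : seq T) (P : T -> R -> Prop) :
  (forall t, t \in s -> near0 (P t)) -> near0 (fun e => forall t, t \in s -> P t e).
Proof.
elim: s => [|t s IH] h; first by exists 1.
have := near0_and (h t (mem_head t s)) (IH (fun u us => h u (mem_behead (s := t :: s) us))).
by apply: near0_mono => e _ [Pt Ps] u; rewrite inE => /predU1P[->|/Ps].
Qed.

Lemma near0_witness P : near0 P -> exists2 e, 0 < e & P e.
Proof.
case=> d d0 h; exists (d / 2); first by rewrite divr_gt0.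
by apply: h; [rewrite divr_gt0 | lra].
Qed.

Lemma near0_lt (d : R) : 0 < d -> near0 (fun e => e < d).
Proof. by exists d. Qed.

Lemma near0_lerp_gt0 (a b : R) : 0 < a -> near0 (fun e => 0 < (1 - e) * a + e * b).
Proof.
move=> a0; set u := `|b - a|; have u0 : 0 <= u := normr_ge0 _.
have hu : - u <= b - a by rewrite lerNl /u -normrN ler_norm.
exists (a / (u + 1)); first by rewrite divr_gt0 // ltr_wpDl.
move=> e e0 ed; have : e * (u + 1) < a by rewrite -ltr_pdivlMr // ltr_wpDl.
have : - (e * u) <= e * (b - a) by rewrite -mulrN ler_wpM2l // ltW.
lra.
Qed.

Lemma near0_orient_gt0 (k : R) (a b m q : pt) : 0 < k * orient a b m ->
  near0 (fun e => 0 < k * orient a b ((1 - e) *: m + e *: q)).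
Proof.
move=> h; apply: near0_mono (near0_lerp_gt0 (k * orient a b q) h) => e _.
suff -> : k * orient a b ((1 - e) *: m + e *: q) =
  (1 - e) * (k * orient a b m) + e * (k * orient a b q) by [].
by rewrite orient_lerp; ring.
Qed.

Lemma near0_not_conv3 (a b c m q : pt) : orient a b c != 0 -> ~ conv3 a b c m ->
  near0 (fun e => ~ conv3 a b c ((1 - e) *: m + e *: q)).
Proof.
move=> o0; rewrite (conv3_baryP _ o0) => hm.
pose k := - (orient a b c)^-1.
have kE (u v p : pt) : (0 < k * orient u v p) = (orient u v p / orient a b c < 0).
  by rewrite /k mulNr oppr_gt0 mulrC.
have stays (u v : pt) : orient u v m / orient a b c < 0 ->
    near0 (fun e => orient u v ((1 - e) *: m + e *: q) / orient a b c < 0).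
  by rewrite -kE => /(near0_orient_gt0 q); apply: near0_mono => e _; rewrite kE.
have [h1|h1] := ltP (orient b c m / orient a b c) 0.
  by apply: near0_mono (stays _ _ h1) => e _ he /(conv3_baryP _ o0) [+ _ _]; rewrite leNgt he.
have [h2|h2] := ltP (orient c a m / orient a b c) 0.
  by apply: near0_mono (stays _ _ h2) => e _ he /(conv3_baryP _ o0) [_ + _]; rewrite leNgt he.
have [h3|h3] := ltP (orient a b m / orient a b c) 0.
  by apply: near0_mono (stays _ _ h3) => e _ he /(conv3_baryP _ o0) [_ _]; rewrite leNgt he.
by case: hm.
Qed.

Lemma near0_conv3_midpoint (a b z w : pt) : 0 < orient a b z * orient a b w ->
  near0 (fun e => conv3 a b w ((1 - e) *: midpoint a b + e *: z)).
Proof.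
move=> zw; have o0 : orient a b w != 0 by apply: contraTneq zw => ->; rewrite mulr0 ltxx.
set o := orient a b w in zw o0 *.
have half_o : 0 < o^-1 * (2^-1 * o) by rewrite mulrCA mulVf // mulr1 invr_gt0 ltr0n.
have near_a : 0 < o^-1 * orient b w (midpoint a b).
  by rewrite orient_midpoint orient_xyx mulr0 addr0 -orient_rot.
have near_b : 0 < o^-1 * orient w a (midpoint a b).
  by rewrite orient_midpoint orient_xyy mulr0 add0r -(orient_rot b w a) -orient_rot.
apply: near0_mono (near0_and (near0_orient_gt0 z near_a) (near0_orient_gt0 z near_b)).
move=> e e0 [qa qb]; apply/(conv3_baryP _ o0); rewrite ![_ / o]mulrC.
split; [exact: ltW | exact: ltW |].
rewrite orient_lerp orient_midpoint orient_xyx orient_xyy !(mulr0, add0r) mulrCA.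
apply: mulr_ge0; first exact: ltW.
rewrite mulrC; apply: (divr_ge0_scale (s := o)); first by rewrite mulrC ltW.
by rewrite lt_def mulf_neq0 //= -expr2 sqr_ge0.
Qed.

End NearZero.

(** * Convex polygons *)

Lemma big_cast_ord (V : nmodType) m k (e : m = k) (F : 'I_m -> V) :
  \sum_(i < m) F i = \sum_(j < k) F (cast_ord (esym e) j).
Proof. by case: k / e; apply: eq_bigr => i _; rewrite cast_ord_id. Qed.

Lemma ordS_ind m (P : 'I_m.+1 -> Prop) :
  P ord0 -> (forall i, P i -> P (ordS i)) -> forall i, P i.
Proof.
move=> P0 PS [k]; elim: k => [|k IH] hk.
  by rewrite (_ : Ordinal hk = ord0) //; exact: val_inj.
by have := PS _ (IH (ltnW hk)); congr P; apply: val_inj; rewrite /= modn_small.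
Qed.

Lemma val_ordS m (i : 'I_m) : nat_of_ord (ordS i) = if i.+1 == m then 0 else i.+1.
Proof.
rewrite /=; case: eqP => [->|ne]; first exact: modnn.
by rewrite modn_small // ltn_neqAle ltn_ord andbT; apply/eqP.
Qed.

Lemma ordS_neq m (i : 'I_m.+2) : ordS i != i.
Proof.
apply/eqP => /(congr1 (@nat_of_ord _)); have := ltn_ord i.
by rewrite val_ordS /=; case: eqP; lia.
Qed.

Lemma ordSS_neq m (i : 'I_m.+3) : ordS (ordS i) != i.
Proof.
apply/eqP => /(congr1 (@nat_of_ord _)); have := ltn_ord i; rewrite !val_ordS.
by case: (i.+1 =P m.+3) => /= [|_]; [|case: (i.+2 =P m.+3)]; lia.
Qed.

Section ConvexPolygon.
Variable R : realFieldType.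
Local Notation pt := 'rV[R]_2.
Variable n : nat.
Local Notation c := n.+3.
Variable v : 'I_c -> pt.
Hypothesis v_convex : convex_polygon v.
Implicit Types (i j : 'I_c) (p x : pt).

Local Notation i1 := (ordS (ord0 : 'I_c)).
Local Notation i2 := (ordS i1).

Definition edge_orient i p := orient (v i) (v (ordS i)) p.
Definition on_edge i p := in_conv [:: v i; v (ordS i)] p.
(* The orientation of the polygon: 1 if counterclockwise, -1 if clockwise. *)
Definition sigma := Num.sg (edge_orient ord0 (v i2)).

Lemma edge_orient_affine i : affine (edge_orient i).
Proof. exact: orient_affine. Qed.

Lemma edge_orient_vertex_neq0 i j : j != i -> j != ordS i -> edge_orient i (v j) != 0.
Proof.
move=> ji jSi; apply: contraTneq (v_convex ji jSi ji jSi).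
by rewrite /edge_orient => ->; rewrite mul0r ltxx.
Qed.

Lemma sg_edge_orient_vertex i j : j != i -> j != ordS i ->
  Num.sg (edge_orient i (v j)) = sigma.
Proof.
have same_side i' j' k : j' != i' -> j' != ordS i' -> k != i' -> k != ordS i' ->
    Num.sg (edge_orient i' (v j')) = Num.sg (edge_orient i' (v k)).
  by move=> *; apply: sg_eq_of_mul_gt0; apply: v_convex.
have SS_S i' : ordS (ordS i') != ordS i' by rewrite (inj_eq (@ordS_inj _)) ordS_neq.
(* Convexity makes the sign constant along each edge, and rotating v_i v_(i+1) v_(i+2)
   carries it from edge i to edge i + 1. *)
suff sg_next i' : Num.sg (edge_orient i' (v (ordS (ordS i')))) = sigma.
  by move=> ji jSi; rewrite (same_side i j (ordS (ordS i))) ?sg_next ?ordSS_neq.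
elim/ordS_ind: i' => // i' <-; rewrite {2}/edge_orient orient_rot.
apply: same_side; rewrite ?ordSS_neq ?ordS_neq //.
- by rewrite eq_sym ordS_neq.
- by rewrite eq_sym ordSS_neq.
Qed.

Lemma edge_orient_vertex_gt0 i j : j != i -> j != ordS i -> 0 < sigma * edge_orient i (v j).
Proof.
move=> ji jSi; rewrite -(sg_edge_orient_vertex ji jSi) -normrEsg normr_gt0.
exact: edge_orient_vertex_neq0.
Qed.

Lemma edge_orient_vertex_ge0 i j : 0 <= sigma * edge_orient i (v j).
Proof.
have [->|ji] := eqVneq j i; first by rewrite /edge_orient orient_xyx mulr0.
have [->|jSi] := eqVneq j (ordS i); first by rewrite /edge_orient orient_xyy mulr0.
exact/ltW/edge_orient_vertex_gt0.
Qed.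

Lemma sigma_sq : sigma * sigma = 1.
Proof. by rewrite -expr2 sqr_sg edge_orient_vertex_neq0 ?ordSS_neq // ordS_neq. Qed.

Lemma sigma_neq0 : sigma != 0.
Proof. by apply: contra_eq_neq sigma_sq => ->; rewrite mulr0 eq_sym oner_neq0. Qed.

Lemma sigma_mul_eq0 (X : R) : (sigma * X == 0) = (X == 0).
Proof. by rewrite mulf_eq0 (negPf sigma_neq0). Qed.

Lemma polygon_ptsP x : polygon_pts v x <->
  exists w : 'I_c -> R, [/\ forall i, 0 <= w i, \sum_i w i = 1 & x = \sum_i w i *: v i].
Proof.
rewrite /polygon_pts /in_conv.
have e : size [seq v i | i <- enum 'I_c] = c by rewrite size_map size_enum_ord.
have nthE k : [seq v i | i <- enum 'I_c]`_(cast_ord (esym e) k) = v k.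
  by rewrite /= (nth_map k) ?size_enum_ord // nth_ord_enum.
split.
  case=> w [w0 [w1 ->]]; exists (fun i => w (cast_ord (esym e) i)); split => //.
    by rewrite -w1 (big_cast_ord e).
  by rewrite (big_cast_ord e); apply: eq_bigr => i _; rewrite nthE.
case=> w [w0 w1 ->]; exists (fun k => w (cast_ord e k)); split => //.
split; first by rewrite (big_cast_ord e) -w1; apply: eq_bigr => i _; rewrite cast_ordKV.
by rewrite (big_cast_ord e); apply: eq_bigr => i _; rewrite cast_ordKV nthE.
Qed.

Lemma conv3_polygon a b d x : conv3 (v a) (v b) (v d) x -> polygon_pts v x.
Proof.
case=> al [be [ga [al0 be0 ga0 w1 ->]]]; apply/polygon_ptsP.
pose ind (k : 'I_c) (t : R) j := (j == k)%:R * t.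
have indE (V : lmodType R) k t (P : 'I_c -> V) : \sum_j ind k t j *: P j = t *: P k.
  rewrite (bigD1 k) //= big1 => [|j /negPf jk]; rewrite /ind ?eqxx ?jk.
  - by rewrite mul1r addr0.
  - by rewrite mul0r scale0r.
have indR k t : \sum_j ind k t j = t.
  by rewrite (bigD1 k) //= big1 => [|j /negPf jk]; rewrite /ind ?eqxx ?jk ?mul1r ?mul0r ?addr0.
exists (fun j => ind a al j + ind b be j + ind d ga j); split.
- by move=> j; rewrite !addr_ge0 // mulr_ge0 // ler0n.
- by rewrite !big_split /= !indR.
- by under eq_bigr do rewrite !scalerDl; rewrite !big_split /= !indE.
Qed.

Lemma halfplanes_polygon x : (forall i, 0 <= sigma * edge_orient i x) -> polygon_pts v x.
Proof.
(* x lies in the fan triangle v0 v_(j-1) v_j for the first j > 1 with W j <= 0. *)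
move=> hx; pose W k := sigma * orient (v ord0) (v (inord k)) x.
have W1 : 0 <= W 1%N by rewrite /W (_ : inord 1 = i1) ?hx //; apply: val_inj; rewrite /= inordK.
have Wlast : W n.+2 <= 0.
  have := hx (inord n.+2); rewrite /edge_orient (_ : ordS (inord n.+2) = ord0).
    by rewrite orient_swap /W mulrN; lra.
  by apply: val_inj; rewrite /= inordK // modnn.
have [|j /andP[j1 Wj] jmin] := ex_minnP (P := fun k => (1 < k)%N && (W k <= 0)).
  by exists n.+2; rewrite Wlast.
have jc : (j <= n.+2)%N by apply: jmin; rewrite Wlast.
have Wa : 0 <= W j.-1.
  have [a1|a1] := leqP j.-1 1; first by rewrite (_ : j.-1 = 1%N) //; lia.
  by rewrite leNgt; apply/negP => Wa; have := jmin j.-1; rewrite a1 (ltW Wa) => /(_ isT); lia.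
pose ia : 'I_c := inord j.-1; pose ij : 'I_c := inord j.
have Sia : ordS ia = ij by apply: val_inj; rewrite /= !inordK ?modn_small //; lia.
have ia0 : (ord0 : 'I_c) != ia by apply/eqP => /(congr1 (@nat_of_ord _)); rewrite /= inordK; lia.
have ij0 : (ord0 : 'I_c) != ordS ia.
  by rewrite Sia; apply/eqP => /(congr1 (@nat_of_ord _)); rewrite /= inordK; lia.
have o_pos : 0 < sigma * orient (v ord0) (v ia) (v ij).
  by rewrite orient_rot -Sia; apply: edge_orient_vertex_gt0.
apply: (conv3_polygon (a := ord0) (b := ia) (d := ij)); apply/conv3_baryP.
  by apply: contraTneq o_pos => ->; rewrite mulr0 ltxx.
split; apply: divr_ge0_scale o_pos.
- by rewrite -Sia; apply: hx.
- by rewrite orient_swap mulrN oppr_ge0.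
- exact: Wa.
Qed.

Lemma polygonP x : polygon_pts v x <-> forall i, 0 <= sigma * edge_orient i x.
Proof.
split=> [hx i|]; last exact: halfplanes_polygon.
apply: conv_ge0 (affineZ _ (edge_orient_affine i)) hx _ => _ /mapP[j _ ->].
exact: edge_orient_vertex_ge0.
Qed.

Lemma on_edge_orient i p : on_edge i p -> edge_orient i p = 0.
Proof.
move=> hp; apply: conv_eq0 (edge_orient_affine i) hp _ => q.
by rewrite !inE => /orP[]/eqP->; rewrite /edge_orient ?orient_xyx ?orient_xyy.
Qed.

Lemma on_edge_polygon i p : on_edge i p -> polygon_pts v p.
Proof.
move=> hp; apply/polygonP => k; apply: conv_ge0 (affineZ _ (edge_orient_affine k)) hp _.
by move=> q; rewrite !inE => /orP[]/eqP->; apply: edge_orient_vertex_ge0.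
Qed.

Lemma polygon_on_edge i x : polygon_pts v x -> edge_orient i x = 0 -> on_edge i x.
Proof.
case/polygon_ptsP => w [w0 w1 xE] hx.
have sum0 : \sum_k w k * (sigma * edge_orient i (v k)) = sigma * edge_orient i x.
  rewrite xE /edge_orient orient_sum // mulr_sumr.
  by apply: eq_bigr => k _; rewrite mulrCA.
rewrite hx mulr0 in sum0.
have hw j : j != i -> j != ordS i -> w j = 0.
  move=> ji jSi; have /eqP := psumr_eq0P (P := xpredT)
    (fun k _ => mulr_ge0 (w0 k) (edge_orient_vertex_ge0 i k)) sum0 (i := j) isT.
  by rewrite mulf_eq0 (gt_eqF (edge_orient_vertex_gt0 ji jSi)) orbF => /eqP.
have sum2 (V : nmodType) (F : 'I_c -> V) : (forall j, j != i -> j != ordS i -> F j = 0) ->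
    \sum_j F j = F i + F (ordS i).
  move=> F0; rewrite (bigD1 i) //= (bigD1 (ordS i)) ?ordS_neq //= big1 ?addr0 //.
  by move=> j /andP[]; exact: F0.
rewrite sum2 in w1; last exact: hw.
rewrite (sum2 _ (fun j => w j *: v j)) in xE; last by move=> j ji jSi; rewrite hw ?scale0r.
apply/in_conv2; exists (w (ordS i)); last by rewrite xE -w1 addrK.
by rewrite w0 -w1 lerDr w0.
Qed.

Lemma sg_edge_orient i x : polygon_pts v x -> edge_orient i x != 0 ->
  Num.sg (edge_orient i x) = sigma.
Proof.
move=> /polygonP/(_ i) hx x0; rewrite -[RHS]sgr_id.
by rewrite [RHS](@sg_eq_of_mul_gt0 _ _ (edge_orient i x)) // lt_def hx mulf_neq0 ?sigma_neq0.
Qed.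

Lemma midpoint_interior i x y : polygon_pts v x -> polygon_pts v y ->
  ~ (on_edge i x /\ on_edge i y) -> 0 < sigma * edge_orient i (midpoint x y).
Proof.
move=> hx hy nxy; have sx := (polygonP x).1 hx i; have sy := (polygonP y).1 hy i.
have zero_on_edge p : polygon_pts v p -> sigma * edge_orient i p = 0 -> on_edge i p.
  by move=> hp /eqP; rewrite sigma_mul_eq0 => /eqP; apply: polygon_on_edge.
rewrite /edge_orient orient_midpoint mulrDr (mulrCA sigma) (mulrCA sigma) -mulrDr.
rewrite pmulr_rgt0 ?invr_gt0 // lt_def addr_ge0 // andbT.
apply/negP => /eqP s0; apply: nxy; rewrite /edge_orient in sx sy.
by split; apply: zero_on_edge => //; rewrite /edge_orient; lra.
Qed.

Lemma sg_orient_from_vertex i y z : on_edge i y -> polygon_pts v z ->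
  orient (v i) y z != 0 -> Num.sg (orient (v i) y z) = sigma.
Proof.
move=> /in_conv2[s /andP[s0 _] ->] zH.
rewrite orient_lerp_dst mulf_eq0 negb_or => /andP[sn0 z0].
by rewrite sgrM gtr0_sg ?lt_def ?sn0 // mul1r sg_edge_orient.
Qed.

Lemma on_edge01 p : on_edge ord0 p -> on_edge i1 p -> p = v i1.
Proof.
move=> /on_edge_orient h0 /in_conv2[s _ pE]; move: h0.
rewrite pE /edge_orient orient_lerp orient_xyy mulr0 add0r => /eqP.
rewrite mulf_eq0 (negPf (edge_orient_vertex_neq0 _ _)) ?ordSS_neq ?ordS_neq // orbF.
by move/eqP->; rewrite subr0 scale1r scale0r addr0.
Qed.

Lemma on_edge1_orient0 p : on_edge i1 p -> (edge_orient ord0 p == 0) = (p == v i1).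
Proof.
move=> p1; apply/eqP/eqP => [p0|->]; last by rewrite /edge_orient orient_xyy.
exact/on_edge01/p1/polygon_on_edge/p0/on_edge_polygon/p1.
Qed.

Lemma vertex1_on_edge i : on_edge i (v i1) -> i = ord0 \/ i = i1.
Proof.
move/on_edge_orient; have [->|i1i] := eqVneq i1 i; first by right.
have [/ordS_inj->|i1Si] := eqVneq i1 (ordS i); first by left.
by move/eqP; rewrite (negPf (edge_orient_vertex_neq0 i1i i1Si)).
Qed.

End ConvexPolygon.

(** * Triangulations *)

Section DedupBy.
Variables (A : eqType) (e : rel A).
Hypotheses (e_refl : reflexive e) (e_sym : symmetric e).

Fixpoint dedup_by (s : seq A) : seq A :=
  if s is x :: s' then
    let d := dedup_by s' in if has (e x) d then d else x :: d
  else [::].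

Lemma dedup_by_sub s : {subset dedup_by s <= s}.
Proof.
elim: s => [//|x s IH] u /=; case: ifP => _; first by move/IH; rewrite inE orbC => ->.
by rewrite !inE => /predU1P[->|/IH->]; rewrite ?eqxx ?orbT.
Qed.

Lemma dedup_by_rep s x : x \in s -> exists2 u, u \in dedup_by s & e x u.
Proof.
elim: s => [//|y s IH]; rewrite inE => /predU1P[->|/IH[u us xu]] /=.
  by case: ifP => [/hasP[u]|_]; [exists u | exists y; rewrite ?inE ?eqxx].
by case: ifP => _; exists u; rewrite ?inE ?us ?orbT.
Qed.

Lemma dedup_by_pairwise s : pairwise (fun u w => ~~ e u w) (dedup_by s).
Proof.
elim: s => [//|x s IH] /=; case: ifP => // /negbT/hasPn ne_x.
by rewrite /= IH andbT; apply/allP.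
Qed.

Lemma dedup_by_nth_inj x0 s (i j : 'I_(size (dedup_by s))) :
  e (nth x0 (dedup_by s) i) (nth x0 (dedup_by s) j) -> i = j.
Proof.
move/(pairwiseP x0): (dedup_by_pairwise s) => ne ij.
case: (ltngtP i j) => [lt|lt|/val_inj//].
- by have := ne i j (ltn_ord i) (ltn_ord j) lt; rewrite ij.
- by have := ne j i (ltn_ord j) (ltn_ord i) lt; rewrite e_sym ij.
Qed.

End DedupBy.

Section Triangles.
Variable R : realFieldType.
Local Notation pt := 'rV[R]_2.
Local Notation tri := (triangle R).
Implicit Types (t : tri) (k : 'I_3) (p x y : pt).

Definition tri_vertex t k : pt := (tri_vs t)`_k.
Definition edge_src t k := tri_vertex t k.
Definition edge_dst t k := tri_vertex t (ordS k).
Definition edge_apex t k := tri_vertex t (ordS (ordS k)).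

Lemma ord3P k : [\/ k = 0, k = 1 | k = 2].
Proof.
by case: k => [[|[|[|//]]] ?]; [constructor 1|constructor 2|constructor 3]; exact: val_inj.
Qed.

Lemma ordS3E : [/\ ordS (0 : 'I_3) = 1, ordS (1 : 'I_3) = 2 & ordS (2 : 'I_3) = 0].
Proof. by split; apply: val_inj. Qed.

Lemma ordS3K k : ordS (ordS (ordS k)) = k.
Proof. by apply: val_inj; case: k => [[|[|[|//]]] ?]. Qed.

Lemma sum_ord3 (V : nmodType) (F : 'I_3 -> V) : \sum_k F k = F 0 + F 1 + F 2.
Proof.
by rewrite !big_ord_recl big_ord0 addr0 addrA; congr (F _ + F _ + F _); apply: val_inj.
Qed.

Lemma orient_edge t k :
  orient (edge_src t k) (edge_dst t k) (edge_apex t k) = orient t.1.1 t.1.2 t.2.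
Proof.
by rewrite /edge_src /edge_dst /edge_apex; case: ordS3E => e0 e1 e2;
  case: (ord3P k) => ->; rewrite ?e0 ?e1 ?e2 /orient /=; ring.
Qed.

Lemma mem_tri_edge t k p :
  (p \in tri_vs t) = [|| p == edge_src t k, p == edge_dst t k | p == edge_apex t k].
Proof.
rewrite /edge_src /edge_dst /edge_apex /tri_vs !inE; case: ordS3E => e0 e1 e2.
by case: (ord3P k) => ->; rewrite ?e0 ?e1 ?e2 /=;
  case: (p == t.1.1); case: (p == t.1.2); case: (p == t.2).
Qed.

Lemma in_conv_tri_edge t k p :
  in_conv (tri_vs t) p <-> conv3 (edge_src t k) (edge_dst t k) (edge_apex t k) p.
Proof.
rewrite /edge_src /edge_dst /edge_apex /tri_vs in_conv3; case: ordS3E => e0 e1 e2.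
case: (ord3P k) => ->; rewrite ?e0 ?e1 ?e2 /=; split => //.
- by move/conv3_rot.
- by move/conv3_rot/conv3_rot.
- by move/conv3_rot/conv3_rot.
- by move/conv3_rot.
Qed.

Lemma nondegenerate_neq t :
  nondegenerate t -> [/\ t.1.1 != t.1.2, t.1.2 != t.2 & t.1.1 != t.2].
Proof.
rewrite /nondegenerate => nd; split; apply: contraNneq nd => ->;
  by rewrite ?orient_xxy ?orient_xyy ?orient_xyx.
Qed.

Lemma nondegenerate_uniq t : nondegenerate t -> uniq (tri_vs t).
Proof. by case/nondegenerate_neq => n1 n2 n3; rewrite /tri_vs /= !inE negb_or n1 n3 n2. Qed.

Definition endpoints t k x y :=
  ((edge_src t k == x) && (edge_dst t k == y)) || ((edge_src t k == y) && (edge_dst t k == x)).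

Lemma endpoints_sym t k x y : endpoints t k x y = endpoints t k y x.
Proof. by rewrite /endpoints orbC. Qed.

Lemma endpoints_exists t x y : nondegenerate t ->
  x \in tri_vs t -> y \in tri_vs t -> x != y -> exists k, endpoints t k x y.
Proof.
move=> /nondegenerate_neq[n1 n2 n3]; rewrite /tri_vs !inE => hx hy xy.
rewrite /endpoints /edge_src /edge_dst; case: ordS3E => e0 e1 e2.
case/or3P: hx => /eqP ex; case/or3P: hy => /eqP ey; subst x y; rewrite ?eqxx // in xy.
- by exists 0; rewrite e0 !eqxx.
- by exists 2; rewrite e2 !eqxx orbT.
- by exists 0; rewrite e0 !eqxx orbT.
- by exists 1; rewrite e1 !eqxx.
- by exists 2; rewrite e2 !eqxx.
- by exists 1; rewrite e1 !eqxx orbT.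
Qed.

Lemma endpoints_inj t k1 k2 : nondegenerate t ->
  endpoints t k1 (edge_src t k2) (edge_dst t k2) -> k1 = k2.
Proof.
move=> /nondegenerate_neq[n1 n2 n3].
rewrite /endpoints /edge_src /edge_dst; case: ordS3E => e0 e1 e2.
case: (ord3P k1) => ->; case: (ord3P k2) => ->; rewrite ?e0 ?e1 ?e2 /tri_vertex //=.
all: rewrite ?[t.1.2 == t.1.1]eq_sym ?[t.2 == t.1.2]eq_sym ?[t.2 == t.1.1]eq_sym.
all: by rewrite ?eqxx ?(negPf n1) ?(negPf n2) ?(negPf n3) ?andbF.
Qed.

End Triangles.

Section Triangulation.
Variable R : realFieldType.
Local Notation pt := 'rV[R]_2.
Local Notation tri := (triangle R).
Variable n : nat.
Local Notation c := n.+3.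
Variables (v : 'I_c -> pt) (T : seq tri).
Hypothesis v_convex : convex_polygon v.
Hypothesis T_triangulation : triangulation v T.
Implicit Types (t : tri) (p q x y : pt).

Local Notation i1 := (ordS (ord0 : 'I_c)).
Local Notation i2 := (ordS i1).

Lemma triangulation_nondegenerate t : t \in T -> nondegenerate t.
Proof. by case: T_triangulation => nd _ _ _; apply: nd. Qed.

Lemma triangulation_cover x : polygon_pts v x <-> exists2 t, t \in T & in_conv (tri_vs t) x.
Proof. by case: T_triangulation => _ cover _ _; apply: cover. Qed.

Lemma triangulation_face t1 t2 x : t1 \in T -> t2 \in T ->
  in_conv (tri_vs t1) x -> in_conv (tri_vs t2) x ->
  in_conv [seq p <- tri_vs t1 | p \in tri_vs t2] x.
Proof. by case: T_triangulation => _ _ face _ t1T t2T x1 x2; apply/face. Qed.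

Lemma triangulation_vertex_polygon t p : t \in T -> p \in tri_vs t -> polygon_pts v p.
Proof. by move=> tT pt; apply/triangulation_cover; exists t => //; apply: in_conv_mem. Qed.

Lemma shared_vertex t1 t2 a b w q : t1 \in T -> t2 \in T ->
  {in tri_vs t1, forall p, p != w -> orient a b p = 0} ->
  in_conv (tri_vs t1) q -> in_conv (tri_vs t2) q -> orient a b q != 0 -> w \in tri_vs t2.
Proof.
move=> t1T t2T on_ab q1 q2; apply: contraNT => wt2; apply/eqP.
apply: conv_eq0 (orient_affine a b) (triangulation_face t1T t2T q1 q2) _ => p.
rewrite mem_filter => /andP[pt2 pt1]; apply: on_ab => //.
by apply: contraNneq wt2 => <-.
Qed.

Lemma near0_triangles_through m q : near0 (fun e => forall t, t \in T ->
  in_conv (tri_vs t) ((1 - e) *: m + e *: q) -> in_conv (tri_vs t) m).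
Proof.
apply: near0_all => t tT; have [mt|mt] := classic (in_conv (tri_vs t) m); first by exists 1.
have nd := triangulation_nondegenerate tT.
apply: near0_mono (near0_not_conv3 q nd (fun mc => mt (proj2 (in_conv3 _ _ _ _) mc))).
by move=> e _ ne /in_conv3.
Qed.

Definition tri_perm t u := perm_eq (tri_vs t) (tri_vs u).

Lemma tri_perm_refl : reflexive tri_perm.
Proof. by move=> t; apply: perm_refl. Qed.

Lemma tri_perm_sym : symmetric tri_perm.
Proof. by move=> t u; apply: perm_sym. Qed.

(* T may list a triangle several times, possibly with permuted vertices; half-edges are
   indexed over a list holding one copy of each. *)
Definition triangles := dedup_by tri_perm T.
Definition half_edge := ('I_(size triangles) * 'I_3)%type.
Implicit Types h : half_edge.

Definition he_tri h : tri := nth (0, 0, 0) triangles h.1.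
Definition he_src h := edge_src (he_tri h) h.2.
Definition he_dst h := edge_dst (he_tri h) h.2.
Definition he_apex h := edge_apex (he_tri h) h.2.
Definition he_ends h x y := endpoints (he_tri h) h.2 x y.

Lemma he_tri_in h : he_tri h \in T.
Proof. by apply: (@dedup_by_sub _ tri_perm); apply: mem_nth. Qed.

Lemma he_nondegenerate h : orient (he_src h) (he_dst h) (he_apex h) != 0.
Proof. by rewrite orient_edge; apply: triangulation_nondegenerate (he_tri_in h). Qed.

Lemma he_conv h q :
  in_conv (tri_vs (he_tri h)) q <-> conv3 (he_src h) (he_dst h) (he_apex h) q.
Proof. exact: in_conv_tri_edge. Qed.

Lemma he_ends_in h : he_src h \in tri_vs (he_tri h) /\ he_dst h \in tri_vs (he_tri h).
Proof. by rewrite !(mem_tri_edge _ h.2) !eqxx ?orbT. Qed.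

Lemma he_vertex_polygon h :
  [/\ polygon_pts v (he_src h), polygon_pts v (he_dst h) & polygon_pts v (he_apex h)].
Proof.
have vH p : p \in tri_vs (he_tri h) -> polygon_pts v p.
  exact: triangulation_vertex_polygon (he_tri_in h).
by split; apply: vH; rewrite (mem_tri_edge _ h.2) eqxx ?orbT.
Qed.

Definition he_next h : half_edge := (h.1, ordS h.2).

Lemma he_next_apex h : he_apex (he_next h) = he_src h.
Proof. by rewrite /he_apex /he_src /edge_apex /edge_src /= ordS3K. Qed.

Lemma he_next2_dst h : he_dst (he_next (he_next h)) = he_src h.
Proof. by rewrite /he_dst /he_src /edge_dst /edge_src /= ordS3K. Qed.

Lemma he_next2_apex h : he_apex (he_next (he_next h)) = he_dst h.
Proof. by rewrite /he_apex /he_dst /edge_apex /edge_dst /= ordS3K. Qed.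

Lemma he_ends_self h : he_ends h (he_src h) (he_dst h).
Proof. by rewrite /he_ends /endpoints !eqxx. Qed.

Lemma he_endsP h x y : he_ends h x y ->
  (he_src h = x /\ he_dst h = y) \/ (he_src h = y /\ he_dst h = x).
Proof. by case/orP => /andP[/eqP e1 /eqP e2]; [left|right]. Qed.

Lemma he_ends_mem h x y : he_ends h x y -> tri_vs (he_tri h) =i [:: x; y; he_apex h].
Proof.
move=> /he_endsP[[<- <-]|[<- <-]] p; rewrite (mem_tri_edge _ h.2) !inE //.
by rewrite orbA (orbC (p == _)) -orbA.
Qed.

Lemma he_ends_line h x y : he_ends h x y ->
  {in tri_vs (he_tri h), forall p, p != he_apex h -> orient x y p = 0}.
Proof.
move=> ends p; rewrite (he_ends_mem ends) !inE => /or3P[]/eqP-> //; rewrite ?eqxx //.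
- by rewrite orient_xyx.
- by rewrite orient_xyy.
Qed.

Lemma he_ends_conv h x y q : he_ends h x y -> conv3 x y (he_apex h) q ->
  in_conv (tri_vs (he_tri h)) q.
Proof. by move=> /he_endsP[[<- <-]|[<- <-]] hq; apply/he_conv => //; apply: conv3_swap. Qed.

Definition boundary_edge h := exists i, on_edge v i (he_src h) /\ on_edge v i (he_dst h).

Lemma he_exists t x y : t \in T -> x \in tri_vs t -> y \in tri_vs t -> x != y ->
  exists h, he_ends h x y /\ tri_vs (he_tri h) =i tri_vs t.
Proof.
move=> tT xt yt xy; have [u uT tu] := dedup_by_rep tri_perm_refl tT.
have mem_u : tri_vs u =i tri_vs t by move=> w; rewrite (perm_mem tu).
have ndu : nondegenerate u by apply/triangulation_nondegenerate/(dedup_by_sub uT).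
have [k ek] : exists k, endpoints u k x y by apply: endpoints_exists; rewrite ?mem_u.
pose h := (Ordinal (etrans (index_mem u triangles) uT), k).
have triE : he_tri h = u by apply: nth_index.
by exists h; rewrite /he_ends triE.
Qed.

Lemma he_exists_apex t x y p : t \in T ->
  x \in tri_vs t -> y \in tri_vs t -> p \in tri_vs t -> orient x y p != 0 ->
  exists h, he_ends h x y /\ he_apex h = p.
Proof.
move=> tT xt yt pt oxyp.
have xy : x != y by apply: contraNneq oxyp => ->; rewrite orient_xxy.
have py : p != y by apply: contraNneq oxyp => ->; rewrite orient_xyy.
have px : p != x by apply: contraNneq oxyp => ->; rewrite orient_xyx.
have [h [eh memh]] := he_exists tT xt yt xy; exists h; split => //.
by move: pt; rewrite -memh (he_ends_mem eh) !inE (negPf px) (negPf py) => /eqP.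
Qed.

Definition opposite h h' := he_ends h' (he_src h) (he_dst h) &&
  (orient (he_src h) (he_dst h) (he_apex h') * orient (he_src h) (he_dst h) (he_apex h) < 0).

Lemma opposite_sym h h' : opposite h h' -> opposite h' h.
Proof.
case/andP => /he_endsP[[e1 e2]|[e1 e2]] neg; rewrite /opposite e1 e2 ?he_ends_self.
- by rewrite mulrC neg.
- rewrite /he_ends endpoints_sym -/(he_ends h _ _) he_ends_self.
  by rewrite !(orient_swap (he_src h)) mulrNN mulrC.
Qed.

Lemma same_side_apex h1 h2 x y : he_ends h1 x y -> he_ends h2 x y ->
  0 < orient x y (he_apex h1) * orient x y (he_apex h2) -> he_apex h1 = he_apex h2.
Proof.
move=> e1 e2 same; have o1 : orient x y (he_apex h1) != 0.
  by apply: contraTneq same => ->; rewrite mul0r ltxx.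
have [e e0 [e1' q2]] := near0_witness (near0_and (near0_lt ltr01) (near0_conv3_midpoint same)).
set q := (1 - e) *: midpoint x y + e *: he_apex h1 in q2.
have q1 : conv3 x y (he_apex h1) q by apply: conv3_lerp_midpoint; rewrite (ltW e0) (ltW e1').
have oq : orient x y q != 0.
  rewrite orient_lerp orient_midpoint orient_xyx orient_xyy !(mulr0, add0r).
  by rewrite mulf_neq0 // gt_eqF.
have := shared_vertex (he_tri_in h1) (he_tri_in h2) (he_ends_line e1)
  (he_ends_conv e1 q1) (he_ends_conv e2 q2) oq.
rewrite (he_ends_mem e2) !inE => /or3P[]/eqP // z1E.
- by move: o1; rewrite z1E orient_xyx eqxx.
- by move: o1; rewrite z1E orient_xyy eqxx.
Qed.

Lemma opposite_uniq h h1 h2 : opposite h h1 -> opposite h h2 -> h1 = h2.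
Proof.
case/andP => e1 neg1 /andP[e2 neg2].
have apexE : he_apex h1 = he_apex h2 by apply: same_side_apex e1 e2 _; nra.
have he_uniq h' : uniq (tri_vs (he_tri h')).
  exact/nondegenerate_uniq/triangulation_nondegenerate/he_tri_in.
have idx : h1.1 = h2.1.
  apply: (dedup_by_nth_inj tri_perm_sym (x0 := (0, 0, 0))).
  apply: uniq_perm; rewrite ?he_uniq //.
  by move=> p; rewrite -/(he_tri h1) -/(he_tri h2) (he_ends_mem e1) (he_ends_mem e2) apexE.
have triE : he_tri h1 = he_tri h2 by rewrite /he_tri idx.
have k : h1.2 = h2.2.
  apply: (endpoints_inj (triangulation_nondegenerate (he_tri_in h2))).
  have : endpoints (he_tri h2) h1.2 (he_src h) (he_dst h) by rewrite -triE.
  by case: (he_endsP e2) => -[<- <-] //; rewrite endpoints_sym.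
by rewrite [h1]surjective_pairing [h2]surjective_pairing idx k.
Qed.

Lemma triangle_across h : ~ boundary_edge h ->
  exists2 t, t \in T & [/\ he_src h \in tri_vs t, he_dst h \in tri_vs t &
    exists2 p, p \in tri_vs t &
      orient (he_src h) (he_dst h) p * orient (he_src h) (he_dst h) (he_apex h) < 0].
Proof.
move=> interior; have [xH yH _] := he_vertex_polygon h.
set x := he_src h in interior xH *; set y := he_dst h in interior yH *.
set z := he_apex h; have o0 : orient x y z != 0 := he_nondegenerate h.
(* Push the midpoint m of xy slightly towards q, the reflection of z through m. *)
set m := midpoint x y; set q := x + y - z.
have m_int i : 0 < sigma v * edge_orient v i m.
  by apply: midpoint_interior => // xy; apply: interior; exists i.
have [e e0 [me_int me_through]] := near0_witness (near0_and
  (near0_all (fun i (_ : i \in enum 'I_c) => near0_orient_gt0 q (m_int i)))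
  (near0_triangles_through m q)).
set me := (1 - e) *: m + e *: q in me_int me_through.
have [t tT me_t] : exists2 t, t \in T & in_conv (tri_vs t) me.
  by apply/triangulation_cover/polygonP => // i; apply/ltW/me_int; rewrite mem_enum.
have m_t := me_through t tT me_t.
have m_h : in_conv (tri_vs (he_tri h)) m by apply/he_conv/conv3_midpoint.
have half_o : 2^-1 * orient x y z != 0 by rewrite mulf_neq0 ?invr_eq0 ?pnatr_eq0.
have xt : x \in tri_vs t.
  rewrite /x -(he_next_apex h); apply: shared_vertex (he_tri_in _) tT
    (he_ends_line (he_ends_self (he_next h))) m_h m_t _.
  change (orient y z m != 0).
  by rewrite orient_midpoint orient_xyx mulr0 addr0 -orient_rot.
have yt : y \in tri_vs t.
  rewrite /y -(he_next2_apex h); apply: shared_vertex (he_tri_in _) tT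
    (he_ends_line (he_ends_self (he_next (he_next h)))) m_h m_t _.
  rewrite he_next2_dst; change (orient z x m != 0).
  by rewrite orient_midpoint orient_xyy mulr0 add0r -(orient_rot y z x) -orient_rot.
have o_me : orient x y z * orient x y me < 0.
  rewrite orient_lerp orient_parallelogram orient_midpoint !(orient_xyx, orient_xyy).
  rewrite !(mulr0, add0r, sub0r, mulrN) oppr_lt0 mulrCA mulr_gt0 //.
  by rewrite lt_def mulf_neq0 //= -expr2 sqr_ge0.
have [p pt neg] := conv_lt0 (affineZ _ (orient_affine x y)) me_t o_me.
by exists t => //; split => //; exists p => //; rewrite mulrC.
Qed.

Lemma opposite_exists h : ~ boundary_edge h -> exists h', opposite h h'.
Proof.
case/triangle_across => t tT [xt yt [p pt neg]].
have [|h' [ends apexE]] := he_exists_apex tT xt yt pt.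
  by apply: contraTneq neg => ->; rewrite mul0r ltxx.
by exists h'; rewrite /opposite ends apexE.
Qed.

Lemma boundary_no_opposite h h' : boundary_edge h -> ~~ opposite h h'.
Proof.
have [_ _ zH] := he_vertex_polygon h; have [_ _ zH'] := he_vertex_polygon h'.
case=> i []; rewrite /opposite => /in_conv2[s _ ->] /in_conv2[s' _ ->].
apply/nandP; right; rewrite -leNgt.
rewrite !orient_lerp_base mulrACA; apply: mulr_ge0; first by rewrite -expr2 sqr_ge0.
rewrite -[X in 0 <= X]mul1r -(sigma_sq v_convex) mulrACA.
by apply: mulr_ge0; [exact: (polygonP v_convex _).1 zH' i | exact: (polygonP v_convex _).1 zH i].
Qed.

Lemma corner_triangle : exists2 t, t \in T & v i1 \in tri_vs t /\
  exists2 y, y \in tri_vs t & on_edge v i1 y /\ edge_orient v ord0 y != 0.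
Proof.
have [e e0 [e1 through]] := near0_witness
  (near0_and (near0_lt ltr01) (near0_triangles_through (v i1) (v i2))).
set q := (1 - e) *: v i1 + e *: v i2 in through.
have q_edge : on_edge v i1 q by apply/in_conv2; exists e; rewrite ?(ltW e0) ?(ltW e1).
have [t tT qt] := (triangulation_cover q).1 (on_edge_polygon v_convex q_edge).
have ge0 i p : p \in tri_vs t -> 0 <= sigma v * edge_orient v i p.
  by move=> pt; apply: (polygonP v_convex p).1 (triangulation_vertex_polygon tT pt) i.
have zero_on_edge i p : p \in tri_vs t -> sigma v * edge_orient v i p = 0 -> on_edge v i p.
  move=> pt /eqP; rewrite (sigma_mul_eq0 v_convex) => /eqP.
  exact: (polygon_on_edge v_convex (triangulation_vertex_polygon tT pt)).
have aff i := affineZ (sigma v) (edge_orient_affine v i).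
exists t => //; split.
  have [||p pt [p0 p1]] :=
    conv_common_zero (aff ord0) (aff i1) (through t tT qt) (ge0 ord0) _ (ge0 i1).
  - by rewrite /edge_orient orient_xyy mulr0.
  - by rewrite /edge_orient orient_xyx mulr0.
  by rewrite -(on_edge01 v_convex (zero_on_edge _ _ pt p0) (zero_on_edge _ _ pt p1)).
have [||y yt [y1 y0]] := conv_face (aff i1) (aff ord0) qt (ge0 i1).
- by rewrite (on_edge_orient q_edge) mulr0.
- have v2_pos : 0 < sigma v * edge_orient v ord0 (v i2).
    by apply: (edge_orient_vertex_gt0 v_convex); rewrite ?ordSS_neq // ordS_neq.
  by rewrite /edge_orient orient_lerp orient_xyy mulr0 add0r mulrCA mulr_gt0.
exists y => //; split; first exact: zero_on_edge.
by apply: contraTneq y0 => ->; rewrite mulr0 ltxx.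
Qed.

(** * The signed count *)

Section SpernerFlux.
Variable lab : pt -> 'I_c.
Hypothesis lab_sperner : sperner_labelling v T lab.

Local Notation la := (lab (v ord0)).
Local Notation lb := (lab (v i1)).

Definition rainbow t := [/\ lab t.1.1 != lab t.1.2, lab t.1.1 != lab t.2 & lab t.1.2 != lab t.2].

Definition edge_type (u w : 'I_c) : R :=
  ((u == la) && (w == lb))%:R - ((u == lb) && (w == la))%:R.
(* [edge_orient v ord0 p == 0] is a decidable stand-in for [on_edge v ord0 p]; the two
   agree on the polygon. *)
Definition potential p : R := ((lab p == lb) && (edge_orient v ord0 p == 0))%:R.
Definition weight x y : R := edge_type (lab x) (lab y) - (potential y - potential x).
Definition flux h : R :=
  Num.sg (orient (he_src h) (he_dst h) (he_apex h)) * weight (he_src h) (he_dst h).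
Definition corner h : bool :=
  ((he_src h == v i1) && (edge_orient v ord0 (he_dst h) != 0)) ||
  ((he_dst h == v i1) && (edge_orient v ord0 (he_src h) != 0)).

Lemma edge_typeN u w : edge_type w u = - edge_type u w.
Proof.
by rewrite /edge_type opprB; case: (w == la); case: (u == lb); case: (w == lb); case: (u == la).
Qed.

Lemma weightN x y : weight y x = - weight x y.
Proof. rewrite /weight edge_typeN; ring. Qed.

Lemma flux_opposite h h' : opposite h h' -> flux h' = - flux h.
Proof.
rewrite /flux => /andP[/he_endsP[[-> ->]|[-> ->]] neg].
- by rewrite (sg_opp_of_mul_lt0 neg) mulNr.
- by rewrite weightN (orient_swap (he_src h)) sgrN (sg_opp_of_mul_lt0 neg) mulrNN mulNr.
Qed.

Lemma edge_type_cycle l0 l1 l2 : ~ [/\ l0 != l1, l0 != l2 & l1 != l2] ->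
  edge_type l0 l1 + edge_type l1 l2 + edge_type l2 l0 = 0.
Proof.
move=> not_rainbow; have diag l : edge_type l l = 0 by have := edge_typeN l l; lra.
have [<-|n01] := eqVneq l0 l1; first by rewrite diag (edge_typeN l0 l2) add0r subrr.
have [<-|n02] := eqVneq l0 l2; first by rewrite diag (edge_typeN l0 l1) addr0 subrr.
have [<-|n12] := eqVneq l1 l2; first by rewrite diag (edge_typeN l1 l0) addr0 addNr.
by case: not_rainbow.
Qed.

Lemma flux_triangle (i : 'I_(size triangles)) : ~ rainbow (he_tri (i, 0)) ->
  \sum_k flux (i, k) = 0.
Proof.
move=> not_rainbow; set t := he_tri (i, 0).
have fluxE k :
    flux (i, k) = Num.sg (orient t.1.1 t.1.2 t.2) * weight (edge_src t k) (edge_dst t k).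
  by rewrite /flux /he_src /he_dst /he_apex orient_edge.
rewrite (eq_bigr _ (fun k _ => fluxE k)) -mulr_sumr sum_ord3.
rewrite /edge_src /edge_dst; case: ordS3E => -> -> ->; rewrite /tri_vertex /=.
suff -> : weight t.1.1 t.1.2 + weight t.1.2 t.2 + weight t.2 t.1.1 = 0 by rewrite mulr0.
by have := edge_type_cycle not_rainbow; rewrite /weight; lra.
Qed.

Lemma lab_vertex_inj i j : lab (v i) = lab (v j) -> i = j.
Proof. by case: lab_sperner => inj _; apply: inj. Qed.

Lemma lab_on_edge h p i : p \in tri_vs (he_tri h) -> on_edge v i p ->
  lab p = lab (v i) \/ lab p = lab (v (ordS i)).
Proof.
by case: lab_sperner => _ edge pt; apply: edge; exists (he_tri h) => //; apply: he_tri_in.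
Qed.

Lemma flux_on_edge0 h : on_edge v ord0 (he_src h) -> on_edge v ord0 (he_dst h) ->
  flux h = sigma v * (corner h)%:R.
Proof.
move=> sx sy; have [xt yt] := he_ends_in h.
rewrite /corner (on_edge_orient sx) (on_edge_orient sy) eqxx !andbF mulr0n mulr0.
suff w0 : weight (he_src h) (he_dst h) = 0 by rewrite /flux w0 mulr0.
rewrite /weight /potential (on_edge_orient sx) (on_edge_orient sy) eqxx !andbT.
have ab : (la == lb) = false.
  by apply/eqP => /lab_vertex_inj/eqP; rewrite eq_sym (negPf (ordS_neq _)).
have ba : (lb == la) = false by rewrite eq_sym.
by case: (lab_on_edge xt sx) => ->; case: (lab_on_edge yt sy) => ->;
  rewrite /edge_type !eqxx ?ab ?ba /=; ring.
Qed.

Lemma flux_on_edge1 h : on_edge v i1 (he_src h) -> on_edge v i1 (he_dst h) ->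
  flux h = sigma v * (corner h)%:R.
Proof.
move=> sx sy; have [xt yt] := he_ends_in h; have [_ _ zH] := he_vertex_polygon h.
have nd := he_nondegenerate h.
have not_la p : p \in tri_vs (he_tri h) -> on_edge v i1 p -> (lab p == la) = false.
  move=> pt pe; apply/negbTE/eqP; case: (lab_on_edge pt pe) => -> /lab_vertex_inj/eqP.
    by rewrite (negPf (ordS_neq _)).
  by rewrite (negPf (ordSS_neq _)).
have pot p : on_edge v i1 p -> potential p = (p == v i1)%:R.
  move=> pe; rewrite /potential (on_edge1_orient0 v_convex pe).
  by case: (p =P v i1) => [->|]; rewrite ?eqxx ?andbF.
rewrite /flux /weight /corner /edge_type !(not_la _ xt sx, not_la _ yt sy) !(andFb, andbF).
rewrite !(on_edge1_orient0 v_convex sx, on_edge1_orient0 v_convex sy) !pot //.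
have [xv|xv] := eqVneq (he_src h) (v i1).
  have yv : he_dst h != v i1 by apply: contraNneq nd; rewrite xv => ->; rewrite orient_xxy.
  rewrite xv (negPf yv) in nd *.
  by rewrite (sg_orient_from_vertex v_convex sy zH nd) /=; ring.
have [yv|yv] := eqVneq (he_dst h) (v i1); last by rewrite /=; ring.
rewrite yv orient_swap in nd *.
rewrite sgrN (sg_orient_from_vertex v_convex sx zH) /=; last by rewrite -oppr_eq0.
ring.
Qed.

Lemma flux_on_edge_other h i : i != ord0 -> i != i1 ->
  on_edge v i (he_src h) -> on_edge v i (he_dst h) -> flux h = sigma v * (corner h)%:R.
Proof.
move=> i0 i1' sx sy; have [xt yt] := he_ends_in h.
have not_lb p : p \in tri_vs (he_tri h) -> on_edge v i p -> (lab p == lb) = false.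
  move=> pt pe; apply/negbTE/eqP; case: (lab_on_edge pt pe) => -> /lab_vertex_inj.
    by move/eqP; rewrite (negPf i1').
  by move/ordS_inj/eqP; rewrite (negPf i0).
have not_v1 p : on_edge v i p -> (p == v i1) = false.
  by move=> pe; apply/eqP => pv; move: pe; rewrite pv => /(vertex1_on_edge v_convex) [] /eqP;
    rewrite ?(negPf i0) ?(negPf i1').
rewrite /flux /weight /corner /edge_type /potential.
by rewrite !(not_lb _ xt sx, not_lb _ yt sy, not_v1 _ sx, not_v1 _ sy) !andbF /=; ring.
Qed.

Lemma flux_boundary_edge h : boundary_edge h -> flux h = sigma v * (corner h)%:R.
Proof.
case=> i []; have [->|i0] := eqVneq i ord0; first exact: flux_on_edge0.
have [->|i1'] := eqVneq i i1; first exact: flux_on_edge1.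
exact: flux_on_edge_other.
Qed.

Lemma corner_half_edge : exists h, boundary_edge h /\ corner h.
Proof.
have [t tT [v1t [y yt [y1 y0]]]] := corner_triangle.
have v1y : v i1 != y by apply: contraNneq y0 => <-; rewrite /edge_orient orient_xyy.
have [h [ends _]] := he_exists tT v1t yt v1y.
have v1_edge : on_edge v i1 (v i1).
  by apply/in_conv2; exists 0; rewrite ?lexx ?ler01 // subr0 scale1r scale0r addr0.
exists h; split; first by exists i1; case: (he_endsP ends) => -[-> ->].
by rewrite /corner; case: (he_endsP ends) => -[-> ->]; rewrite eqxx y0 ?orbT.
Qed.

Definition interior h := [exists h', opposite h h'].
Definition twin h := if [pick h' | opposite h h'] is Some h' then h' else h.

Lemma twin_opposite h : interior h -> opposite h (twin h).
Proof. by rewrite /twin; case: pickP => [//|none] /existsP[h' hh']; rewrite none in hh'. Qed.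

Lemma twin_boundary h : ~~ interior h -> twin h = h.
Proof. by rewrite /twin; case: pickP => // h' hh' /existsP[]; exists h'. Qed.

Lemma interior_twin h : interior (twin h) = interior h.
Proof.
have [hi|hb] := boolP (interior h); last by rewrite twin_boundary // (negPf hb).
by apply/existsP; exists h; apply/opposite_sym/twin_opposite.
Qed.

Lemma twinK : involutive twin.
Proof.
move=> h; have [hi|hb] := boolP (interior h); last by rewrite !twin_boundary.
apply: opposite_uniq (twin_opposite _) (opposite_sym (twin_opposite hi)).
by rewrite interior_twin.
Qed.

Lemma interior_flux_sum : \sum_(h | interior h) flux h = 0.
Proof.
have opp : \sum_(h | interior h) flux h = - \sum_(h | interior h) flux h.
  rewrite [LHS](reindex_inj (can_inj twinK)) /= -sumrN.
  apply: eq_big => h; first by rewrite interior_twin.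
  by rewrite -interior_twin => /twin_opposite; rewrite twinK => /flux_opposite.
lra.
Qed.

Lemma boundary_flux h : ~~ interior h -> flux h = sigma v * (corner h)%:R.
Proof.
move=> hb; apply: flux_boundary_edge; apply: NNPP => inner.
by have [h' hh'] := opposite_exists inner; case/existsP: hb; exists h'.
Qed.

Lemma flux_sum_eq0 : (forall t, t \in T -> ~ rainbow t) -> \sum_h flux h = 0.
Proof.
move=> no_rainbow; rewrite -(pair_big xpredT xpredT (fun i k => flux (i, k))) /=.
by apply: big1 => i _; apply/flux_triangle/no_rainbow/he_tri_in.
Qed.

Theorem sperner_rainbow : exists2 t, t \in T & rainbow t.
Proof.
apply: NNPP => none; have := flux_sum_eq0 (fun t tT r => none (ex_intro2 _ _ t tT r)).
rewrite (bigID interior) /= interior_flux_sum add0r (eq_bigr _ boundary_flux).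
rewrite -mulr_sumr => /eqP; rewrite (sigma_mul_eq0 v_convex); apply/negP.
have [h [hb ch]] := corner_half_edge.
have {}hb : ~~ interior h by apply/existsPn => h'; apply: boundary_no_opposite.
by rewrite (bigD1 h) //= ch gt_eqF // ltr_pwDl ?ltr01 // sumr_ge0 // => *; apply: ler0n.
Qed.

End SpernerFlux.

End Triangulation.

Theorem mainTheorem2 (R : realFieldType) (c : nat) (v : 'I_c -> 'rV[R]_2)
    (T : seq (triangle R)) (lab : 'rV[R]_2 -> 'I_c) :
  (3 <= c)%N ->
  convex_polygon v ->
  triangulation v T ->
  sperner_labelling v T lab ->
  exists2 t, t \in T &
    [/\ lab t.1.1 != lab t.1.2, lab t.1.1 != lab t.2 & lab t.1.2 != lab t.2].
Proof.
case: c v lab => [|[|[|n]]] // v lab _ v_convex T_triangulation lab_sperner.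
exact: (sperner_rainbow v_convex T_triangulation lab_sperner).
Qed.
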